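(* Let $\mathcal{R}=(\mathcal{W},\mathcal{R}_1,\mathcal{R}_2)$ with $\mathcal{W}=\{1,\dots,m\}$, let $\mathcal{S}$, $L$, $K_1,\dots,K_4$ be constructed from $\mathcal{R}$ as below, and let $\mathcal{T}$ be a solution to the $\mathcal{S}$-cyclic triomino problem. Fix $s\in\mathbb{Z}^2$. If $p(s,i)$ holds for some $1\le i\le 4$, then $p(s,i)$ holds for every $1\le i\le 4$.
   Context: A domino set is $\mathcal{R}=(\mathcal{W},\mathcal{R}_1,\mathcal{R}_2)$ with $\mathcal{W}$ non-empty finite and $\mathcal{R}_1,\mathcal{R}_2\subset\mathcal{W}^2$; here $\mathcal{W}=\{1,\dots,m\}$. Let $u_1=(1,0),u_2=(0,1),u_3=(-1,0),u_4=(0,-1)$, indices mod 4. Fix $n\ge 2m+1$ and regard integers as elements of $\mathbb{Z}_n$. Let $L=\{(w,0,0): w\in\mathcal{W}\}$, $K_1=L\cup\{(0,b,a):(a,b)\in\mathcal{R}_1\}$, $K_2=L\cup\{(0,a,b):(a,b)\in\mathcal{R}_2\}$, $K_3=L\cup\{(0,a,b):(a,b)\in\mathcal{R}_1\}$, $K_4=L\cup\{(0,b,a):(a,b)\in\mathcal{R}_2\}$, with $K_{i+4}=K_i$. Let $\mathcal{V}=\mathbb{Z}_n$, $\mathcal{S}_i=\{(a+k,b+k,c+k):(a,b,c)\in K_i, k\in\mathcal{V}\}$, $\mathcal{S}_{i+4}=\mathcal{S}_i$, and $\mathcal{S}=(\mathcal{V},\mathcal{S}_1,\dots,\mathcal{S}_4)$.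 A solution to the $\mathcal{S}$-cyclic triomino problem is a function $\mathcal{T}:\mathbb{Z}^2\to\mathcal{V}$ with $(\mathcal{T}(s),\mathcal{T}(s+u_i),\mathcal{T}(s+u_{i+1}))\in\mathcal{S}_i$ for all $s$ and $1\le i\le 4$. For $s\in\mathbb{Z}^2$, $i\in\mathbb{Z}$, $p(s,i)$ is the statement $(\mathcal{T}(s),\mathcal{T}(s+u_i),\mathcal{T}(s+u_{i+1}))\in L$ and $q(s,i)$ is the statement $(\mathcal{T}(s),\mathcal{T}(s+u_i),\mathcal{T}(s+u_{i+1}))\in K_i\setminus L$. *)

From mathcomp Require Import all_boot all_algebra.
Set Implicit Arguments. Unset Strict Implicit. Unset Printing Implicit Defensive.
Import GRing.Theory.
Local Open Scope ring_scope.

Definition pt := (int * int)%type.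
Definition addp (s t : pt) : pt := (s.1 + t.1, s.2 + t.2).

Definition u (i : nat) : pt :=
  match (i %% 4)%N with
  | 1 => (1, 0)
  | 2 => (0, 1)
  | 3 => (-1, 0)
  | _ => (0, -1)
  end.

Definition triple3 (n : nat) := ('Z_n * 'Z_n * 'Z_n)%type.

Definition inL (n m : nat) (t : triple3 n) : Prop :=
  exists w : nat, (1 <= w <= m)%N /\ t = (w%:R, 0, 0).

Definition inK (n m : nat) (R1 R2 : rel nat) (i : nat) (t : triple3 n) : Prop :=
  inL m t \/
  exists a b : nat,
    match (i %% 4)%N with
    | 1 => R1 a b /\ t = (0, b%:R, a%:R)
    | 2 => R2 a b /\ t = (0, a%:R, b%:R)
    | 3 => R1 a b /\ t = (0, a%:R, b%:R)
    | _ => R2 a b /\ t = (0, b%:R, a%:R)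
    end.

Definition inS (n m : nat) (R1 R2 : rel nat) (i : nat) (t : triple3 n) : Prop :=
  exists (k : 'Z_n) (x : triple3 n),
    inK m R1 R2 i x /\ t = (x.1.1 + k, x.1.2 + k, x.2 + k).

Definition tri (n : nat) (T : pt -> 'Z_n) (s : pt) (i : nat) : triple3 n :=
  (T s, T (addp s (u i)), T (addp s (u i.+1))).

Definition is_solution (n m : nat) (R1 R2 : rel nat) (T : pt -> 'Z_n) : Prop :=
  forall (s : pt) (i : nat), (1 <= i <= 4)%N -> inS m R1 R2 i (tri T s i).

Definition p (n m : nat) (T : pt -> 'Z_n) (s : pt) (i : nat) : Prop :=
  inL m (tri T s i).

From mathcomp Require Import all_boot all_algebra.
From mathcomp Require Import zify.
Import GRing.Theory.
Local Open Scope ring_scope.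

(* If tri(s,i) = (w,0,0) then tri(s,i+1) = (w,0,z) for some z.
   Writing it as x + (k,k,k) with x in K_{i+1}, a triple x = (0,c,_) outside L
   would give w = k and 0 = c + k, i.e. w + c = 0 in Z_n, impossible because
   2 <= w + c <= 2m < n.  Hence x = (w',0,0) is in L, so k = 0 and z = 0.
   Going once around i = 1, 2, 3, 4, 1 gives the claim. *)

Lemma Zp_natr_neq0 (n k : nat) : (0 < k < n)%N -> (k%:R : 'Z_n) != 0.
Proof.
case/andP=> k_gt0 lt_kn; have n_gt1 : (1 < n)%N by apply: leq_ltn_trans lt_kn.
apply/eqP => /(congr1 (@nat_of_ord _)); rewrite val_Zp_nat // modn_small //= => k0.
by rewrite k0 in k_gt0.
Qed.

Section SolutionStep.

Variables (m n : nat) (R1 R2 : rel nat).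
Hypothesis lt_2m_n : (2 * m + 1 <= n)%N.
Hypothesis R1_in_W : forall a b, R1 a b -> (1 <= a <= m)%N /\ (1 <= b <= m)%N.
Hypothesis R2_in_W : forall a b, R2 a b -> (1 <= a <= m)%N /\ (1 <= b <= m)%N.

Lemma inK_cases (i : nat) (x : triple3 n) : inK m R1 R2 i x ->
  inL m x \/ exists c : nat, (1 <= c <= m)%N /\ x.1.1 = 0 /\ x.1.2 = c%:R.
Proof.
case=> [xL | [a [b hab]]]; first by left.
right; move: hab; case: (i %% 4)%N => [|[|[|[|?]]]] [hR ->];
  first [have [ha hb] := R1_in_W _ _ hR | have [ha hb] := R2_in_W _ _ hR];
  by [exists a | exists b].
Qed.

Lemma natrD_Zp_neq0 (c w : nat) :
  (1 <= c <= m)%N -> (1 <= w <= m)%N -> (c%:R + w%:R : 'Z_n) != 0.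
Proof. by move=> hc hw; rewrite -natrD Zp_natr_neq0 //; lia. Qed.

Lemma p_succ (T : pt -> 'Z_n) (s : pt) (i : nat) :
  p m T s i -> inS m R1 R2 i.+1 (tri T s i.+1) -> p m T s i.+1.
Proof.
rewrite /p /inL /tri => -[w [hw [Ts _ Tsu]]] [k [x [xK [Tx1 Tx2 Tx3]]]].
exists w; split => //; rewrite Ts; congr (_, _, _) => //.
case/inK_cases: xK => [[w' [_ xL]] | [c [hc [x1 x2]]]].
  by move: Tx2 Tx3; rewrite xL Tsu /= add0r => <-.
have /eqP[] := natrD_Zp_neq0 c w hc hw.
by rewrite -Ts -Tsu Tx1 Tx2 x1 x2 add0r.
Qed.

End SolutionStep.

Theorem lemma3p2 (m n : nat) (R1 R2 : rel nat)
  (hm : (1 <= m)%N) (hn : (2 * m + 1 <= n)%N)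
  (hR1 : forall a b, R1 a b -> (1 <= a <= m)%N /\ (1 <= b <= m)%N)
  (hR2 : forall a b, R2 a b -> (1 <= a <= m)%N /\ (1 <= b <= m)%N)
  (T : pt -> 'Z_n) (hT : is_solution m R1 R2 T) (s : pt) :
  (exists i, (1 <= i <= 4)%N /\ p m T s i) ->
  forall i, (1 <= i <= 4)%N -> p m T s i.
Proof.
have step i := @p_succ m n R1 R2 hn hR1 hR2 T s i.
have p12 := step 1%N ^~ (hT s 2 isT).
have p23 := step 2%N ^~ (hT s 3 isT).
have p34 := step 3%N ^~ (hT s 4 isT).
(* Indices are read mod 4, so index 5 is index 1 by computation. *)
have p41 : p m T s 4 -> p m T s 1 := step 4%N ^~ (hT s 1 isT).
case=> [i0 [hi0 pi0]] j hj.
by case: i0 hi0 pi0 => [|[|[|[|[|?]]]]] // _ pi0;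
  case: j hj => [|[|[|[|[|?]]]]] // _; tauto.
Qed.
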